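(* Let $K$ be a number field and let $\alpha=p/q$ be a positive rational number with $\gcd(p,q)=1$ which is not an integer and is not of the form $1/n$ for an integer $n$. Let $F\in K((x))$ be a Laurent series such that there exist $d\ge 0$ and polynomials $P_0,\dots,P_d\in K[x]$ with $P_d\ne0$ and $\sum_{i=0}^d P_i(x)F(x^{\alpha^i})=0$. Then there is a Laurent series $G\in K((x))$ with $F(x)=G(x^{q^d})$.
   Context: For a Laurent series $F=\sum_i f_ix^i$ and $\gamma>0$, $F(x^\gamma)=\sum_i f_i x^{\gamma i}$, regarded as a Hahn series (formal series with well-ordered support in $\mathbb{R}$); the equation holds in the field of such Hahn series over $K$. *)

From HB Require Import structures.
From mathcomp Require Import all_boot all_order all_algebra all_field.
Set Implicit Arguments. Unset Strict Implicit. Unset Printing Implicit Defensive.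
Import Order.TTheory GRing.Theory Num.Theory.
Local Open Scope ring_scope.

(* A Laurent series over K: coefficient function int -> K whose support is
   bounded below. *)
Definition laurent (K : Type) (z : K) (f : int -> K) : Prop :=
  exists N : int, forall n : int, n < N -> f n = z.

(* Series with rational exponents (the Hahn series we need all have support
   in a finitely generated subgroup of Q), given by their coefficient
   function rat -> K. *)

(* F(x^g) for a Laurent series F (coefficients f) and g : rat, g > 0:
   the coefficient of x^e is f (e/g) if e/g is an integer, 0 otherwise. *)
Definition hsubst (K : fieldType) (f : int -> K) (g : rat) : rat -> K :=
  fun e => let r := e / g in if denq r == 1 then f (numq r) else 0.

Definition hmulpoly (K : fieldType) (P : {poly K}) (s : rat -> K) : rat -> K :=
  fun e => \sum_(j < size P) P`_j * s (e - j%:R).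

(* G(x^m) for a Laurent series G (coefficients g) and m a positive integer. *)
Definition lsubst (K : fieldType) (g : int -> K) (m : nat) : int -> K :=
  fun n => if (m%:Z %| n)%Z then g (n %/ m%:Z)%Z else 0.

From HB Require Import structures.
From mathcomp Require Import all_boot all_order all_algebra all_field.
From mathcomp Require Import ring zify.
From Stdlib Require Import FunctionalExtensionality.
Set Implicit Arguments. Unset Strict Implicit. Unset Printing Implicit Defensive.
Import Order.TTheory GRing.Theory Num.Theory.
Local Open Scope ring_scope.

(* Write a = p/q.  By induction on k <= d, every exponent n in the support of
   F is divisible by q^k.  For the step, take the least support exponent n0
   that is not divisible by q^(k+1), and the least j0 such that x^j0 occurs in
   P_d, and look at the coefficient of x^(n0 a^d + j0) in the equation.  Any
   term P_(i,j) f_n contributing to it satisfies n a^i = n0 a^d + j0 - j, i.e.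
   p^d n0 + (j0 - j) q^d = n p^i q^(d-i).  If i < d, q^(k+1) divides the right
   side because q^k | n; if i = d then j > j0, so n < n0 and q^(k+1) | n by
   minimality.  Either way q^(k+1) | p^d n0, hence q^(k+1) | n0 as p and q are
   coprime: so the only contribution is P_(d,j0) f_n0 <> 0, a contradiction. *)

Lemma hsubst_neq0 (K : fieldType) (f : int -> K) (g e : rat) :
  g != 0 -> hsubst f g e != 0 -> exists2 n : int, f n != 0 & e = n%:~R * g.
Proof.
rewrite /hsubst => g_neq0; have [den1 fn_neq0|_] := eqVneq (denq (e / g)) 1; last by rewrite eqxx.
exists (numq (e / g)) => //.
have -> : (numq (e / g))%:~R = e / g by rewrite -[RHS]divq_num_den den1 divr1.
by rewrite divfK.
Qed.

Lemma hsubst_mulr (K : fieldType) (f : int -> K) (g : rat) (n : int) :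
  g != 0 -> hsubst f g (n%:~R * g) = f n.
Proof. by move=> g_neq0; rewrite /hsubst mulfK // denq_int numq_int eqxx. Qed.

Lemma laurent_support_ind (K : eqType) (f : int -> K) (z : K) (Q : int -> Prop) :
  laurent z f ->
  (forall n : int, f n != z -> (forall m : int, m < n -> f m != z -> Q m) -> Q n) ->
  forall n : int, f n != z -> Q n.
Proof.
move=> [N fN] IH.
suff below : forall (t : nat) (n : int), n < N + t%:Z -> f n != z -> Q n.
  move=> n; apply: (below `|n - N|%N.+1); have := ler_norm (n - N); rewrite -abszE; lia.
elim=> [|t IHt] n n_lt fn; first by rewrite addr0 in n_lt; rewrite fN ?eqxx in fn.
by apply: (IH n fn) => m m_lt; apply: IHt; lia.
Qed.

Lemma laurent_lsubst (K : fieldType) (f : int -> K) (m : nat) :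
  (0 < m)%N -> laurent 0 f -> (forall n, f n != 0 -> (m%:Z %| n)%Z) ->
  exists g, laurent 0 g /\ f = lsubst g m.
Proof.
move=> m_gt0 [N fN] supp; exists (fun n => f (n * m%:Z)); split.
  by exists (- `|N|) => n n_lt; apply: fN; have := ler_norm N; nia.
apply: functional_extensionality => n; rewrite /lsubst; case: ifPn => [dvd|ndvd].
  by rewrite divzK.
by apply/eqP; apply: contraNT ndvd; apply: supp.
Qed.

Lemma dvdz_coprime_pow_cancel (p q n c : int) (m d : nat) :
  coprimez p q -> (m <= d)%N ->
  (q ^+ m %| p ^+ d * n + c * q ^+ d)%Z -> (q ^+ m %| n)%Z.
Proof.
move=> copr le_md; rewrite rpredDr; last by rewrite dvdz_mull // dvdz_exp2l.
by rewrite Gauss_dvdzr // coprimezXl // coprimezXr // coprimez_sym.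
Qed.

Lemma clear_denominators (p q n0 n : int) (j0 j i t : nat) : q != 0 ->
  n0%:~R * (p%:~R / q%:~R) ^+ (i + t) + j0%:R - j%:R
    = n%:~R * (p%:~R / q%:~R) ^+ i :> rat ->
  p ^+ (i + t) * n0 + (j0%:Z - j%:Z) * q ^+ (i + t) = n * p ^+ i * q ^+ t.
Proof.
move=> q_neq0 H; apply: (intr_inj (R := rat)).
rewrite !(rmorphD, rmorphN, rmorphM, rmorphXn) /= -!pmulrn.
have qi : (q%:~R : rat) ^+ i != 0 by rewrite expf_neq0 ?intr_eq0.
have qt : (q%:~R : rat) ^+ t != 0 by rewrite expf_neq0 ?intr_eq0.
move: H; rewrite !exprMn !exprVn !exprD => H.
transitivity ((n0%:~R * (p%:~R ^+ i * p%:~R ^+ t / (q%:~R ^+ i * q%:~R ^+ t))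
                + j0%:R - j%:R) * (q%:~R ^+ i * q%:~R ^+ t) : rat).
  by field; rewrite qi qt.
by rewrite H; field.
Qed.

Lemma sum_hmulpoly_single (K : fieldType) (P : nat -> {poly K}) (s : nat -> rat -> K)
    (d j0 : nat) (e : rat) :
  (j0 < size (P d))%N ->
  (forall i j : nat, (i <= d)%N -> (i != d) || (j != j0) ->
     (P i)`_j * s i (e - j%:R) = 0) ->
  \sum_(i < d.+1) hmulpoly (P i) (s i) e = (P d)`_j0 * s d (e - j0%:R).
Proof.
move=> j0_lt vanish; rewrite (bigD1 ord_max) //= big1 ?addr0 => [|i ne_id].
  rewrite /hmulpoly (bigD1 (Ordinal j0_lt)) //= big1 ?addr0 // => j ne_jj0.
  by apply: vanish => //; apply/orP; right.
rewrite /hmulpoly big1 // => j _; apply: vanish; first by rewrite -ltnS.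
by apply/orP; left.
Qed.

Section SupportDivisibility.

Variables (K : fieldType) (p q : nat) (f : int -> K) (d : nat) (P : nat -> {poly K}).
Hypotheses (p_gt0 : (0 < p)%N) (q_gt0 : (0 < q)%N) (coprime_pq : coprime p q).
Hypothesis f_laurent : laurent 0 f.
Hypothesis Pd_neq0 : P d != 0.
Hypothesis mahler_eq : forall e : rat,
  \sum_(i < d.+1) hmulpoly (P i) (hsubst f ((p%:R / q%:R) ^+ i)) e = 0.

Local Notation a := (p%:R / q%:R : rat).

Let a_neq0 : a != 0.
Proof. by rewrite mulf_neq0 ?invr_eq0 ?pnatr_eq0 -?lt0n. Qed.

Section MinimalCounterexample.

Variables (k : nat) (n0 : int) (j0 : nat).
Hypothesis k_lt_d : (k < d)%N.
Hypothesis support_dvd_k : forall n, f n != 0 -> (q%:Z ^+ k %| n)%Z.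
Hypothesis support_dvd_below : forall n, n < n0 -> f n != 0 -> (q%:Z ^+ k.+1 %| n)%Z.
Hypothesis Pd_coef_lt_j0 : forall j, (j < j0)%N -> (P d)`_j = 0.

Lemma exponent_clash_dvd (i j : nat) (n : int) :
  (i <= d)%N -> (i != d) || (j != j0) -> (P i)`_j != 0 -> f n != 0 ->
  n%:~R * a ^+ i = n0%:~R * a ^+ d + j0%:R - j%:R ->
  (q%:Z ^+ k.+1 %| n0)%Z.
Proof.
move=> le_id ne_ij Pij_neq0 fn_neq0 clash.
have q_neq0 : q%:Z != 0 by rewrite eqz_nat -lt0n.
have := @clear_denominators p q n0 n j0 j i (d - i) q_neq0; rewrite subnKC // !pmulrn.
move=> /(_ (esym clash)) cleared.
apply: (@dvdz_coprime_pow_cancel p _ _ (j0%:Z - j%:Z) _ d _ k_lt_d); first by rewrite coprimezE.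
rewrite cleared; have [lt_id|ge_id] := ltnP i d.
  rewrite mulrAC exprSr dvdz_mulr // dvdz_mul ?support_dvd_k //.
  by rewrite dvdz_exp ?subn_gt0.
have i_d : i = d by apply/eqP; rewrite eqn_leq le_id.
subst i; rewrite eqxx /= in ne_ij; rewrite subnn expr0 mulr1 dvdz_mulr //.
apply: support_dvd_below fn_neq0.
have lt_j0j : (j0 < j)%N.
  by rewrite ltn_neqAle eq_sym ne_ij leqNgt; apply: contra Pij_neq0 => /Pd_coef_lt_j0 ->.
have pd_gt0 : 0 < p%:Z ^+ d by rewrite exprn_gt0.
have qd_gt0 : 0 < q%:Z ^+ d by rewrite exprn_gt0.
move: cleared; rewrite subnn expr0 mulr1; nia.
Qed.

Lemma minimal_support_dvd : f n0 != 0 -> (P d)`_j0 != 0 -> (q%:Z ^+ k.+1 %| n0)%Z.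
Proof.
move=> fn0_neq0 Pdj0_neq0; apply/negPn/negP => n0_ndvd.
have j0_lt : (j0 < size (P d))%N.
  by rewrite ltnNge; apply: contra Pdj0_neq0 => le_size; rewrite nth_default.
have := mahler_eq (n0%:~R * a ^+ d + j0%:R).
rewrite (sum_hmulpoly_single (s := fun i => hsubst f (a ^+ i)) j0_lt) => [|i j le_id ne_ij].
  by rewrite addrK hsubst_mulr ?expf_neq0 //; apply/eqP; rewrite mulf_eq0 negb_or Pdj0_neq0.
apply/eqP; rewrite mulf_eq0; apply: contraT; rewrite negb_or => /andP[Pij_neq0 term_neq0].
have [n fn_neq0 clash] := hsubst_neq0 (expf_neq0 i a_neq0) term_neq0.
by rewrite (exponent_clash_dvd le_id ne_ij Pij_neq0 fn_neq0 (esym clash)) in n0_ndvd.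
Qed.

End MinimalCounterexample.

Lemma support_dvdS (k : nat) : (k < d)%N ->
  (forall n, f n != 0 -> (q%:Z ^+ k %| n)%Z) ->
  forall n, f n != 0 -> (q%:Z ^+ k.+1 %| n)%Z.
Proof.
move=> k_lt_d dvd_k; apply: (laurent_support_ind (Q := fun n => q%:Z ^+ k.+1 %| n)%Z f_laurent).
move=> n0 fn0_neq0 dvd_below.
have Pd_coef : exists j, (P d)`_j != 0.
  by exists (size (P d)).-1; rewrite -lead_coefE lead_coef_eq0.
have [j0 Pdj0_neq0 j0_min] := ex_minnP Pd_coef.
apply: (minimal_support_dvd k_lt_d dvd_k dvd_below _ fn0_neq0 Pdj0_neq0) => j lt_jj0.
by apply/eqP; apply: contraTT lt_jj0 => /j0_min; rewrite -leqNgt.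
Qed.

Lemma support_dvd n : f n != 0 -> (q%:Z ^+ d %| n)%Z.
Proof.
suff dvd_k k : (k <= d)%N -> forall n, f n != 0 -> (q%:Z ^+ k %| n)%Z by apply: dvd_k.
elim: k => [_ m _|k IHk lt_kd]; first by rewrite expr0 dvd1z.
exact: support_dvdS lt_kd (IHk (ltnW lt_kd)).
Qed.

End SupportDivisibility.

Theorem mainTheorem4 (K : fieldExtType rat) (p q : nat)
  (hp : (0 < p)%N) (hq : (0 < q)%N) (hcop : coprime p q)
  (hnotint : q != 1%N) (hnotinv : p != 1%N)
  (f : int -> K) (hf : laurent 0 f)
  (d : nat) (P : nat -> {poly K}) (hPd : P d != 0)
  (heq : forall e : rat,
     \sum_(i < d.+1)
        hmulpoly (P i) (hsubst f ((p%:R / q%:R) ^+ i)) e = 0) :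
  exists g : int -> K, laurent 0 g /\ f = lsubst g (q ^ d).
Proof.
apply: (laurent_lsubst _ hf) => [|n fn_neq0]; first by rewrite expn_gt0 hq.
by rewrite -natz natrX natz (support_dvd hp hq hcop hf hPd heq fn_neq0).
Qed.
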